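(* If $G$ is a torsion abelian group containing elements $a$ and $b$ of distinct prime orders $p$ and $q$, then $\mathbb{P}(G)$ has exactly one element.
   Context: An abelian group is regarded as a $\mathbb{Z}$-module. For a $\mathbb{Z}$-module $M$ let $M^\circ=M\setminus\{0\}$; define $x\sim'y$ on $M^\circ$ if there exist $m\in M$ and $r,s\in\mathbb{Z}$ with $x=rm$, $y=sm$; let $\sim$ be the equivalence relation generated by $\sim'$; and let $\mathbb{P}(M)=M^\circ/\sim$. *)

(* abelian groups = Z-modules = zmodType. *)
From mathcomp Require Import all_boot all_order all_algebra.
From Stdlib Require Import Relation_Operators.
Set Implicit Arguments. Unset Strict Implicit. Unset Printing Implicit Defensive.
Import GRing.Theory.
Local Open Scope ring_scope.

Definition has_order (M : zmodType) (x : M) (n : nat) : Prop :=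
  (0 < n)%N /\ x *+ n = 0 /\ forall m : nat, (0 < m)%N -> x *+ m = 0 -> (n <= m)%N.

Definition torsion (M : zmodType) : Prop :=
  forall x : M, exists n : nat, (0 < n)%N /\ x *+ n = 0.

Definition sim' (M : zmodType) (x y : M) : Prop :=
  x != 0 /\ y != 0 /\ exists (m : M) (r s : int), x = m *~ r /\ y = m *~ s.

Definition sim (M : zmodType) : M -> M -> Prop := clos_refl_sym_trans M (@sim' M).

(* C is an element of P(M) = M° / ~ , i.e. the ~-class of some x in M° *)
Definition is_Pclass (M : zmodType) (C : M -> Prop) : Prop :=
  exists x : M, x != 0 /\ C = (fun y => y != 0 /\ sim x y).

From mathcomp Require Import all_boot all_order all_algebra.
From Stdlib Require Import Relation_Operators FunctionalExtensionality PropExtensionality.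
Set Implicit Arguments. Unset Strict Implicit. Unset Printing Implicit Defensive.
Import GRing.Theory.
Local Open Scope ring_scope.

(* Two nonzero elements killed by coprime integers r and s are both multiples
   of their sum: by Bezout, u r + v s = 1, and then c = (c + d) (v s) and
   d = (c + d) (u r).  Hence a of order p and b of order q are ~-related, and
   every nonzero x is ~-related to one of them: if n x = 0 with n = p^e m,
   p coprime to m, then either p^e x = 0 (so x ~' b) or x ~' p^e x ~' a. *)

Section ProjectiveClasses.

Variable G : zmodType.

Lemma sim'_coprime (c d : G) (r s : nat) :
  c != 0 -> d != 0 -> c *+ r = 0 -> d *+ s = 0 -> coprime r s -> sim' c d.
Proof.
move=> c0 d0 cr ds co; do 2 (split; first by []).
have [u [v uv]] := Bezoutz r s.
have bezout : u * r + v * s = 1 by rewrite uv /gcdz /=; move/eqP: co => ->.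
have cr' (k : int) : c *~ (k * r) = 0 by rewrite mulrC mulrzA -pmulrn cr mul0rz.
have ds' (k : int) : d *~ (k * s) = 0 by rewrite mulrC mulrzA -pmulrn ds mul0rz.
exists (c + d), (v * s), (u * r); split.
- by rewrite mulrzDl ds' addr0 -[LHS]mulr1z -bezout mulrzDr cr' add0r.
- by rewrite mulrzDl cr' add0r -[LHS]mulr1z -bezout mulrzDr ds' addr0.
Qed.

Lemma sim'_mulrn (x : G) (k : nat) : x != 0 -> x *+ k != 0 -> sim' x (x *+ k).
Proof.
by move=> x0 xk0; do 2 (split; first by []); exists x, 1, k; rewrite mulr1z pmulrn.
Qed.

Lemma has_order_prime_neq0 (a : G) (p : nat) : prime p -> has_order a p -> a != 0.
Proof.
move=> pp [_ [_ minp]]; apply/eqP=> a0.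
by have := minp 1%N isT; rewrite a0 mulr1n leqNgt prime_gt1 // => /(_ erefl).
Qed.

Lemma sim_torsion (x a b : G) (n p s : nat) :
  prime p -> coprime p s -> a != 0 -> a *+ p = 0 -> b != 0 -> b *+ s = 0 ->
  x != 0 -> (0 < n)%N -> x *+ n = 0 -> sim x a.
Proof.
move=> pp cps a0 ap b0 bs x0 n0 xn.
have ba : sim b a by apply/rst_step/(sim'_coprime b0 a0 bs ap); rewrite coprime_sym.
have [m cpm nE] := pfactor_coprime pp n0.
have [xpe0 | xpe0] := eqVneq (x *+ (p ^ logn p n)) 0.
- apply: rst_trans _ ba; apply/rst_step/(sim'_coprime x0 b0 xpe0 bs).
  exact: coprimeXl.
- apply: rst_trans (rst_step _ _ _ _ (sim'_mulrn x0 xpe0)) _.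
  have xpem : x *+ p ^ logn p n *+ m = 0 by rewrite -mulrnA mulnC -nE.
  by apply/rst_step/(sim'_coprime xpe0 a0 xpem ap); rewrite coprime_sym.
Qed.

Lemma Pclass_unique (a : G) :
  a != 0 -> (forall x : G, x != 0 -> sim x a) -> exists! C : G -> Prop, is_Pclass C.
Proof.
move=> a0 sim_a.
exists (fun y => y != 0 /\ sim a y); split; first by exists a.
move=> C [x [x0 ->]].
apply: functional_extensionality => y; apply: propositional_extensionality.
split=> -[y0 xy]; split=> //; apply: rst_trans xy.
- exact: sim_a.
- exact: rst_sym (sim_a x x0).
Qed.

End ProjectiveClasses.

Theorem theorem4p10 (G : zmodType) (a b : G) (p q : nat) :
  torsion G -> prime p -> prime q -> p <> q ->
  has_order a p -> has_order b q ->
  exists! C : G -> Prop, is_Pclass C.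
Proof.
move=> tor pp pq pq_neq ha hb.
have a0 := has_order_prime_neq0 pp ha.
have b0 := has_order_prime_neq0 pq hb.
have cpq : coprime p q by rewrite prime_coprime // dvdn_prime2 //; apply/eqP.
apply: (Pclass_unique a0) => x x0.
have [n [n0 xn]] := tor x.
have [[_ [ap _]] [_ [bq _]]] := (ha, hb).
exact: (sim_torsion pp cpq a0 ap b0 bq x0 n0 xn).
Qed.
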